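(* Let $\lambda_1,\lambda_2,\lambda_3>0$ satisfy $3\lambda_i^2+\lambda_i(\lambda_j+\lambda_k)-\lambda_j\lambda_k>0$ for each $i$ (with $\{i,j,k\}=\{1,2,3\}$), and let $F_1=F_2=F_3=0$. Then, with $\sigma_i,w_i$ given by the 3D $B_2$ formulas, $0<\sigma_i<w_i$ for $i=1,2,3$; hence $\gamma_i=\frac12$ and $\delta_i=\sigma_i/(w_i-\sigma_i)>0$ are well defined and the ansatz $\hat I(\Omega)=\sum_{i=1}^3\frac{1}{2\pi}w_i\mathcal{F}(\Omega\cdot R_i;\gamma_i,\delta_i)$ is a non-negative function for any orthonormal $R_1,R_2,R_3$.
   Context: For $x,y>0$, $g(x,y;a,b)=\dfrac{2(x-a^2/x)(y-b^2/y)(x-a^2/x+y-b^2/y)}{3(x+y)^2}$; for $\{i,j,k\}=\{1,2,3\}$, $\sigma_i=\lambda_i-g(\lambda_i,\lambda_j;F_i,F_j)-g(\lambda_i,\lambda_k;F_i,F_k)$, $w_i=\sigma_i+2g(\lambda_j,\lambda_k;F_j,F_k)$, $\gamma_i=\frac{F_i+w_i}{2w_i}$, $\delta_i=\frac{\sigma_iw_i-F_i^2}{w_i^2-\sigma_iw_i}$. For $\gamma\in(0,1),\delta>0$, with $\xi=\gamma/\delta$, $\eta=(1-\gamma)/\delta$, $\mathcal{F}(\mu;\gamma,\delta)=\frac{1}{2\mathrm{B}(\xi,\eta)}\left(\frac{1+\mu}{2}\right)^{\xi-1}\left(\frac{1-\mu}{2}\right)^{\eta-1}$ on $[-1,1]$.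 *)

From Stdlib Require Import Reals Lra ClassicalEpsilon.
Open Scope R_scope.

Definition g (x y a b : R) : R :=
  2 * (x - a^2 / x) * (y - b^2 / y) * (x - a^2 / x + y - b^2 / y)
  / (3 * (x + y)^2).

(* sigma_i, w_i, gamma_i, delta_i with (li,lj,lk) = (lambda_i,lambda_j,lambda_k),
   (Fi,Fj,Fk) likewise. *)
Definition sigmaB (li lj lk Fi Fj Fk : R) : R :=
  li - g li lj Fi Fj - g li lk Fi Fk.
Definition wB (li lj lk Fi Fj Fk : R) : R :=
  sigmaB li lj lk Fi Fj Fk + 2 * g lj lk Fj Fk.
Definition gam (li lj lk Fi Fj Fk : R) : R :=
  let wi := wB li lj lk Fi Fj Fk in (Fi + wi) / (2 * wi).
Definition del (li lj lk Fi Fj Fk : R) : R :=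
  let si := sigmaB li lj lk Fi Fj Fk in
  let wi := wB li lj lk Fi Fj Fk in
  (si * wi - Fi^2) / (wi^2 - si * wi).

(* Riemann integral over [a,b] when it exists (0 otherwise). *)
Definition RInt (f : R -> R) (a b : R) : R :=
  match excluded_middle_informative (exists pr : Riemann_integrable f a b, True) with
  | left H => RiemannInt (proj1_sig (constructive_indefinite_description _ H))
  | right _ => 0
  end.

(* Improper integral over (0,1): limit of integrals over [1/(n+2), 1 - 1/(n+2)]
   (0 if the limit does not exist). *)
Definition improper01 (f : R -> R) : R :=
  let u := fun n : nat => RInt f (/ INR (n + 2)) (1 - / INR (n + 2)) in
  match excluded_middle_informative (exists l, Un_cv u l) with
  | left H => proj1_sig (constructive_indefinite_description _ H)
  | right _ => 0
  end.

Definition Beta (xi eta : R) : R :=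
  improper01 (fun t => Rpower t (xi - 1) * Rpower (1 - t) (eta - 1)).

Definition Fdist (mu gamma delta : R) : R :=
  let xi := gamma / delta in
  let eta := (1 - gamma) / delta in
  / (2 * Beta xi eta) * Rpower ((1 + mu) / 2) (xi - 1)
                       * Rpower ((1 - mu) / 2) (eta - 1).

Definition vec3 : Type := (R * R * R)%type.
Definition dot (u v : vec3) : R :=
  let '(u1, u2, u3) := u in let '(v1, v2, v3) := v in u1*v1 + u2*v2 + u3*v3.

Definition orthonormal3 (R1 R2 R3 : vec3) : Prop :=
  dot R1 R1 = 1 /\ dot R2 R2 = 1 /\ dot R3 R3 = 1 /\
  dot R1 R2 = 0 /\ dot R1 R3 = 0 /\ dot R2 R3 = 0.

Definition Ihat (l1 l2 l3 F1 F2 F3 : R) (R1 R2 R3 : vec3) (Om : vec3) : R :=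
  / (2 * PI) * wB l1 l2 l3 F1 F2 F3
     * Fdist (dot Om R1) (gam l1 l2 l3 F1 F2 F3) (del l1 l2 l3 F1 F2 F3)
  + / (2 * PI) * wB l2 l1 l3 F2 F1 F3
     * Fdist (dot Om R2) (gam l2 l1 l3 F2 F1 F3) (del l2 l1 l3 F2 F1 F3)
  + / (2 * PI) * wB l3 l1 l2 F3 F1 F2
     * Fdist (dot Om R3) (gam l3 l1 l2 F3 F1 F2) (del l3 l1 l2 F3 F1 F2).

(* With vanishing F's, g(x,y;0,0) = 2xy/(3(x+y)), so
   sigma_i = lambda_i (3 lambda_i^2 + lambda_i (lambda_j + lambda_k) - lambda_j lambda_k)
             / (3 (lambda_i + lambda_j) (lambda_i + lambda_k))
   and w_i - sigma_i = 2 g(lambda_j, lambda_k; 0, 0) > 0.  The hypothesis is exactly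
   sigma_i > 0; then gamma_i = 1/2 and delta_i = sigma_i / (w_i - sigma_i) > 0.
   Non-negativity of the ansatz only needs w_i >= 0, because the beta-type density
   is a product of non-negative factors. *)

From Stdlib Require Import Reals Lra Psatz ClassicalEpsilon.
Open Scope R_scope.

Lemma g_zero_masses x y : 0 < x -> 0 < y -> g x y 0 0 = 2 * x * y / (3 * (x + y)).
Proof. intros hx hy; unfold g; field; lra. Qed.

Lemma g_zero_masses_pos x y : 0 < x -> 0 < y -> 0 < g x y 0 0.
Proof.
  intros hx hy; rewrite g_zero_masses by lra.
  apply Rdiv_lt_0_compat; nra.
Qed.

Lemma sigmaB_zero_masses a b c : 0 < a -> 0 < b -> 0 < c ->
  sigmaB a b c 0 0 0 = a * (3 * a^2 + a * (b + c) - b * c) / (3 * (a + b) * (a + c)).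
Proof. intros ha hb hc; unfold sigmaB; rewrite !g_zero_masses by lra; field; lra. Qed.

Lemma wB_sub_sigmaB li lj lk Fi Fj Fk :
  wB li lj lk Fi Fj Fk - sigmaB li lj lk Fi Fj Fk = 2 * g lj lk Fj Fk.
Proof. unfold wB; ring. Qed.

Lemma sigmaB_zero_masses_pos a b c : 0 < a -> 0 < b -> 0 < c ->
  3 * a^2 + a * (b + c) - b * c > 0 -> 0 < sigmaB a b c 0 0 0.
Proof.
  intros ha hb hc hk; rewrite sigmaB_zero_masses by lra.
  apply Rdiv_lt_0_compat; [apply Rmult_lt_0_compat; lra | nra].
Qed.

Lemma sigmaB_lt_wB_zero_masses a b c : 0 < b -> 0 < c ->
  sigmaB a b c 0 0 0 < wB a b c 0 0 0.
Proof.
  intros hb hc.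
  pose proof (wB_sub_sigmaB a b c 0 0 0); pose proof (g_zero_masses_pos b c hb hc); lra.
Qed.

Lemma gam_zero_mass li lj lk Fj Fk : wB li lj lk 0 Fj Fk <> 0 ->
  gam li lj lk 0 Fj Fk = 1 / 2.
Proof. intros hw; unfold gam; cbv zeta; field; exact hw. Qed.

Lemma del_zero_mass li lj lk Fj Fk :
  let s := sigmaB li lj lk 0 Fj Fk in let w := wB li lj lk 0 Fj Fk in
  s < w -> w <> 0 -> del li lj lk 0 Fj Fk = s / (w - s).
Proof.
  intros s w hsw hw; unfold del; cbv zeta; fold s w.
  replace (w^2 - s * w) with (w * (w - s)) by ring; field; lra.
Qed.

Lemma B2_zero_masses a b c : 0 < a -> 0 < b -> 0 < c ->
  3 * a^2 + a * (b + c) - b * c > 0 ->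
  (0 < sigmaB a b c 0 0 0 < wB a b c 0 0 0) /\
  gam a b c 0 0 0 = 1 / 2 /\
  (del a b c 0 0 0 = sigmaB a b c 0 0 0 / (wB a b c 0 0 0 - sigmaB a b c 0 0 0)
   /\ 0 < del a b c 0 0 0).
Proof.
  intros ha hb hc hk.
  pose proof (sigmaB_zero_masses_pos a b c ha hb hc hk) as hs.
  pose proof (sigmaB_lt_wB_zero_masses a b c hb hc) as hsw.
  assert (hw : wB a b c 0 0 0 <> 0) by lra.
  pose proof (del_zero_mass a b c 0 0 hsw hw) as hdel.
  split; [lra|]; split; [exact (gam_zero_mass a b c 0 0 hw)|].
  split; [exact hdel|]; rewrite hdel; apply Rdiv_lt_0_compat; lra.
Qed.

Lemma RInt_ge0 f a b : a <= b -> (forall x, 0 <= f x) -> 0 <= RInt f a b.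
Proof.
  intros hab hf; unfold RInt.
  destruct excluded_middle_informative as [H|H]; [|lra].
  pose proof (RiemannInt_P19 (RiemannInt_P14 a b 0)
                (proj1_sig (constructive_indefinite_description _ H)) hab) as hle.
  rewrite RiemannInt_P15, Rmult_0_l in hle.
  apply hle; intros; unfold fct_cte; apply hf.
Qed.

Lemma improper01_ge0 f : (forall x, 0 <= f x) -> 0 <= improper01 f.
Proof.
  intros hf; unfold improper01.
  destruct excluded_middle_informative as [H|H]; [|lra].
  destruct (constructive_indefinite_description _ H) as [l hl]; simpl.
  assert (hzero : Un_cv (fun _ => 0) 0).
  { intros e he; exists 0%nat; intros; unfold Rdist; rewrite Rminus_diag, Rabs_R0; lra. }
  refine (Rle_cv_lim _ hzero hl); intros n; apply RInt_ge0; [|exact hf].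
  assert (h2 : 2 <= INR (n + 2)) by (rewrite plus_INR; simpl; pose proof (pos_INR n); lra).
  assert (hinv : / INR (n + 2) <= / 2) by (apply Rinv_le_contravar; lra).
  lra.
Qed.

Lemma Rpower_ge0 x y : 0 <= Rpower x y.
Proof. unfold Rpower; left; apply exp_pos. Qed.

Lemma Beta_ge0 x y : 0 <= Beta x y.
Proof.
  apply improper01_ge0; intros t; apply Rmult_le_pos; apply Rpower_ge0.
Qed.

(* Holds for all arguments: a divergent Beta integral is read as 0 and [/ 0 = 0]. *)
Lemma Fdist_ge0 mu gamma delta : 0 <= Fdist mu gamma delta.
Proof.
  unfold Fdist; cbv zeta.
  apply Rmult_le_pos; [apply Rmult_le_pos|]; try apply Rpower_ge0.
  pose proof (Beta_ge0 (gamma / delta) ((1 - gamma) / delta)) as hB.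
  destruct (Req_dec (Beta (gamma / delta) ((1 - gamma) / delta)) 0) as [E|E].
  - rewrite E, Rmult_0_r, Rinv_0; lra.
  - left; apply Rinv_0_lt_compat; lra.
Qed.

Lemma Ihat_ge0 l1 l2 l3 F1 F2 F3 R1 R2 R3 Om :
  0 <= wB l1 l2 l3 F1 F2 F3 -> 0 <= wB l2 l1 l3 F2 F1 F3 ->
  0 <= wB l3 l1 l2 F3 F1 F2 ->
  0 <= Ihat l1 l2 l3 F1 F2 F3 R1 R2 R3 Om.
Proof.
  intros hw1 hw2 hw3; unfold Ihat.
  assert (hpi : 0 < / (2 * PI)) by (apply Rinv_0_lt_compat; pose proof PI_RGT_0; lra).
  repeat apply Rplus_le_le_0_compat;
    apply Rmult_le_pos; try apply Fdist_ge0; apply Rmult_le_pos; lra.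
Qed.

Theorem mainTheorem10 (l1 l2 l3 : R)
  (h1 : 0 < l1) (h2 : 0 < l2) (h3 : 0 < l3)
  (c1 : 3 * l1^2 + l1 * (l2 + l3) - l2 * l3 > 0)
  (c2 : 3 * l2^2 + l2 * (l1 + l3) - l1 * l3 > 0)
  (c3 : 3 * l3^2 + l3 * (l1 + l2) - l1 * l2 > 0) :
  let F1 := 0 in let F2 := 0 in let F3 := 0 in
  (0 < sigmaB l1 l2 l3 F1 F2 F3 < wB l1 l2 l3 F1 F2 F3 /\
   0 < sigmaB l2 l1 l3 F2 F1 F3 < wB l2 l1 l3 F2 F1 F3 /\
   0 < sigmaB l3 l1 l2 F3 F1 F2 < wB l3 l1 l2 F3 F1 F2) /\
  (gam l1 l2 l3 F1 F2 F3 = 1/2 /\ gam l2 l1 l3 F2 F1 F3 = 1/2 /\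
   gam l3 l1 l2 F3 F1 F2 = 1/2) /\
  (del l1 l2 l3 F1 F2 F3
     = sigmaB l1 l2 l3 F1 F2 F3 / (wB l1 l2 l3 F1 F2 F3 - sigmaB l1 l2 l3 F1 F2 F3)
   /\ 0 < del l1 l2 l3 F1 F2 F3) /\
  (del l2 l1 l3 F2 F1 F3
     = sigmaB l2 l1 l3 F2 F1 F3 / (wB l2 l1 l3 F2 F1 F3 - sigmaB l2 l1 l3 F2 F1 F3)
   /\ 0 < del l2 l1 l3 F2 F1 F3) /\
  (del l3 l1 l2 F3 F1 F2
     = sigmaB l3 l1 l2 F3 F1 F2 / (wB l3 l1 l2 F3 F1 F2 - sigmaB l3 l1 l2 F3 F1 F2)
   /\ 0 < del l3 l1 l2 F3 F1 F2) /\
  (forall R1 R2 R3 : vec3, orthonormal3 R1 R2 R3 ->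
   forall Om : vec3, dot Om Om = 1 ->
   0 <= Ihat l1 l2 l3 F1 F2 F3 R1 R2 R3 Om).
Proof.
  intros F1 F2 F3; subst F1 F2 F3.
  destruct (B2_zero_masses l1 l2 l3 h1 h2 h3 c1) as (S1 & G1 & D1).
  destruct (B2_zero_masses l2 l1 l3 h2 h1 h3 c2) as (S2 & G2 & D2).
  destruct (B2_zero_masses l3 l1 l2 h3 h1 h2 c3) as (S3 & G3 & D3).
  do 5 (split; [tauto|]).
  intros R1 R2 R3 _ Om _; apply Ihat_ge0; lra.
Qed.
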